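(* Let $\mathbb{X}$ be a Cartesian left additive category with a combinator $\mathsf{D}$ sending each $f:A\to B$ to $\mathsf{D}[f]:A\times A\to B$, satisfying [CD.3]: $\mathsf{D}[1]=\pi_1$ and $\mathsf{D}[\pi_j]=\pi_1\pi_j$ ($j\in\{0,1\}$), and [CD.5]: $\mathsf{D}[fg]=\langle\pi_0f,\mathsf{D}[f]\rangle\mathsf{D}[g]$. Then [CD.4] holds: $\mathsf{D}[\langle f,g\rangle]=\langle\mathsf{D}[f],\mathsf{D}[g]\rangle$ for all $f:C\to A$, $g:C\to B$.
   Context: Composition in diagrammatic order. A Cartesian left additive category: a category with finite products whose hom-sets are commutative monoids with $f(g+h)=fg+fh$, $f0=0$, and whose projections are additive. In [CD.3], $\pi_j:A_0\times A_1\to A_j$ and $\pi_1:(A_0\times A_1)\times(A_0\times A_1)\to A_0\times A_1$. *)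

(* Composition is written in
   diagrammatic order: [comp f g] = "f then g" = fg in the paper. *)

Set Implicit Arguments.
Unset Strict Implicit.

Record CLACat : Type := {
  Ob :> Type;
  Hom : Ob -> Ob -> Type;
  comp : forall {A B C : Ob}, Hom A B -> Hom B C -> Hom A C;
  id : forall (A : Ob), Hom A A;
  comp_assoc : forall A B C E (f : Hom A B) (g : Hom B C) (h : Hom C E),
      comp (comp f g) h = comp f (comp g h);
  id_comp : forall A B (f : Hom A B), comp (id A) f = f;
  comp_id : forall A B (f : Hom A B), comp f (id B) = f;
  term : Ob;
  bang : forall (A : Ob), Hom A term;
  bang_unique : forall A (f : Hom A term), f = bang A;
  prod : Ob -> Ob -> Ob;
  pi0 : forall {A B : Ob}, Hom (prod A B) A;
  pi1 : forall {A B : Ob}, Hom (prod A B) B;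
  pair : forall {C A B : Ob}, Hom C A -> Hom C B -> Hom C (prod A B);
  pair_pi0 : forall C A B (f : Hom C A) (g : Hom C B), comp (pair f g) pi0 = f;
  pair_pi1 : forall C A B (f : Hom C A) (g : Hom C B), comp (pair f g) pi1 = g;
  pair_unique : forall C A B (h : Hom C (prod A B)),
      h = pair (comp h pi0) (comp h pi1);
  add : forall {A B : Ob}, Hom A B -> Hom A B -> Hom A B;
  zero : forall (A B : Ob), Hom A B;
  add_assoc : forall A B (f g h : Hom A B), add (add f g) h = add f (add g h);
  add_comm : forall A B (f g : Hom A B), add f g = add g f;
  add_zero : forall A B (f : Hom A B), add f (zero A B) = f;
  comp_addr : forall A B C (f : Hom A B) (g h : Hom B C),
      comp f (add g h) = add (comp f g) (comp f h);
  comp_zeror : forall A B C (f : Hom A B), comp f (zero B C) = zero A C;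
  pi0_add : forall C A B (f g : Hom C (prod A B)),
      comp (add f g) pi0 = add (comp f pi0) (comp g pi0);
  pi0_zero : forall C A B, comp (zero C (prod A B)) pi0 = zero C A;
  pi1_add : forall C A B (f g : Hom C (prod A B)),
      comp (add f g) pi1 = add (comp f pi1) (comp g pi1);
  pi1_zero : forall C A B, comp (zero C (prod A B)) pi1 = zero C B
}.

Arguments comp {c A B C} _ _.
Arguments id {c} A.
Arguments pi0 {c A B}.
Arguments pi1 {c A B}.
Arguments pair {c C A B} _ _.
Arguments prod {c} _ _.

Definition Combinator (X : CLACat) : Type :=
  forall (A B : X), Hom A B -> Hom (prod A A) B.

Definition CD3 (X : CLACat) (D : Combinator X) : Prop :=
  (forall A : X, D A A (id A) = pi1)
  /\ (forall A B : X, D (prod A B) A pi0 = comp pi1 pi0)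
  /\ (forall A B : X, D (prod A B) B pi1 = comp pi1 pi1).

Definition CD5 (X : CLACat) (D : Combinator X) : Prop :=
  forall (A B C : X) (f : Hom A B) (g : Hom B C),
    D A C (comp f g) = comp (pair (comp pi0 f) (D A B f)) (D B C g).

Definition CD4 (X : CLACat) (D : Combinator X) : Prop :=
  forall (C A B : X) (f : Hom C A) (g : Hom C B),
    D C (prod A B) (pair f g) = pair (D C A f) (D C B g).

(* Projecting a pair recovers its components, so by the chain rule [CD.5]
   and [CD.3], D[f] = D[<f,g> pi_0] = <pi_0 <f,g>, D[<f,g>]> pi_1 pi_0
   = D[<f,g>] pi_0, and likewise D[g] = D[<f,g>] pi_1; a map into a product
   is determined by its two projections. *)

Section ChainRuleProjections.

Context {X : CLACat} {D : Combinator X}.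
Hypothesis chain_rule : CD5 D.

Lemma pair_comp_pi1 {C A B E : X} (f : Hom C A) (g : Hom C B) (k : Hom B E) :
  comp (pair f g) (comp pi1 k) = comp g k.
Proof. now rewrite <- comp_assoc, pair_pi1. Qed.

Lemma D_comp_pi0 {C A B : X} (h : Hom C (prod A B)) :
  D (prod A B) A pi0 = comp pi1 pi0 ->
  D C A (comp h pi0) = comp (D C (prod A B) h) pi0.
Proof. intros D_pi0. now rewrite chain_rule, D_pi0, pair_comp_pi1. Qed.

Lemma D_comp_pi1 {C A B : X} (h : Hom C (prod A B)) :
  D (prod A B) B pi1 = comp pi1 pi1 ->
  D C B (comp h pi1) = comp (D C (prod A B) h) pi1.
Proof. intros D_pi1. now rewrite chain_rule, D_pi1, pair_comp_pi1. Qed.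

End ChainRuleProjections.

Theorem lemma2p6 (X : CLACat) (D : Combinator X) :
  CD3 D -> CD5 D -> CD4 D.
Proof.
  intros [_ [D_pi0 D_pi1]] chain_rule C A B f g.
  rewrite (pair_unique (D C (prod A B) (pair f g))).
  rewrite <- (D_comp_pi0 chain_rule (pair f g) (D_pi0 A B)).
  rewrite <- (D_comp_pi1 chain_rule (pair f g) (D_pi1 A B)).
  now rewrite pair_pi0, pair_pi1.
Qed.
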